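(* For $\rho\in(0,1)$ and $\alpha\in\{1/2,1\}$, \[ \mathbf M(\Lambda;\rho,\rho,\alpha)=\rho(2-\rho)+(1-\rho)\Bigl[\rho\Lambda^2+\alpha(1-\rho)\bigl(Q_2(\Lambda)-2\Lambda Q_1(\Lambda)+\Lambda^2Q_0(\Lambda)\bigr)\Bigr], \] where, for $0\le x\le 2$, \[ Q_0(x)=\frac1\pi\int_x^2\sqrt{4-t^2}\,dt=1-\frac{x}{2\pi}\sqrt{4-x^2}-\frac2\pi\arctan\Bigl(\frac{x}{\sqrt{4-x^2}}\Bigr), \] \[ Q_1(x)=\frac1\pi\int_x^2t\sqrt{4-t^2}\,dt=\frac{1}{3\pi}(4-x^2)^{3/2}, \] \[ Q_2(x)=\frac1\pi\int_x^2t^2\sqrt{4-t^2}\,dt=1-\frac{1}{4\pi}x\sqrt{4-x^2}(x^2-2)-\frac2\pi\arcsin\Bigl(\frac x2\Bigr). \] Moreover, the minimizer over $\Lambda$ of $\mathbf M(\Lambda;\rho,\rho,\alpha)$ equals $2\sin(\theta_\alpha(\rho))$, where $\theta_\alpha(\rho)\in[0,\pi/2]$ is the unique solution of \[ \theta+\cot(\theta)\Bigl(1-\tfrac13\cos^2\theta\Bigr)=\frac{\pi(1+\alpha^{-1}\rho-\rho)}{2(1-\rho)}, \] and the left-hand side of this equation is a decreasing function of $\theta$.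
   Context: For $\gamma>0$, $\gamma_\pm=(1\pm\sqrt\gamma)^2$, the Marčenko–Pastur density is $p_\gamma(t)=\frac{1}{2\pi\gamma t}\sqrt{(\gamma_+-t)(t-\gamma_-)}\mathbf 1_{[\gamma_-,\gamma_+]}(t)$ and $P_\gamma(x;k)=\int_x^{\gamma_+}t^kp_\gamma(t)\,dt$. For $\alpha\in\{1/2,1\}$, \[ \mathbf M(\Lambda;\rho,\tilde\rho,\alpha)=\rho+\tilde\rho-\rho\tilde\rho+(1-\tilde\rho)\Bigl[\rho\Lambda^2+\alpha(1-\rho)\bigl(P_\gamma(\Lambda^2;1)-2\Lambda P_\gamma(\Lambda^2;\tfrac12)+\Lambda^2P_\gamma(\Lambda^2;0)\bigr)\Bigr], \] with $\gamma=(\tilde\rho-\rho\tilde\rho)/(\rho-\rho\tilde\rho)$; here $\tilde\rho=\rho$ (square case), so $\gamma=1$. *)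

From Stdlib Require Import Reals Lra.
From Coquelicot Require Import Coquelicot.
Open Scope R_scope.

Definition gamma_plus (g : R) : R := (1 + sqrt g) ^ 2.
Definition gamma_minus (g : R) : R := (1 - sqrt g) ^ 2.

Definition mp_density (g t : R) : R :=
  if Rle_dec (gamma_minus g) t then
    if Rle_dec t (gamma_plus g) then
      / (2 * PI * g * t) * sqrt ((gamma_plus g - t) * (t - gamma_minus g))
    else 0
  else 0.

(* P_gamma(x;k) = int_x^{gamma_+} t^k p_gamma(t) dt, as an (improper at the
   lower endpoint) Riemann integral; t^k = Rpower t k (only t > x >= 0 matter). *)
Definition P_gamma (g x k : R) : R :=
  RInt_gen (fun t => Rpower t k * mp_density g t) (at_right x) (at_point (gamma_plus g)).

Definition gamma_of (rho rt : R) : R := (rt - rho * rt) / (rho - rho * rt).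

Definition M (L rho rt alpha : R) : R :=
  let g := gamma_of rho rt in
  rho + rt - rho * rt +
  (1 - rt) * (rho * L ^ 2 +
     alpha * (1 - rho) * (P_gamma g (L ^ 2) 1 - 2 * L * P_gamma g (L ^ 2) (1 / 2)
                          + L ^ 2 * P_gamma g (L ^ 2) 0)).

Definition Q0 (x : R) : R := / PI * RInt (fun t => sqrt (4 - t ^ 2)) x 2.
Definition Q1 (x : R) : R := / PI * RInt (fun t => t * sqrt (4 - t ^ 2)) x 2.
Definition Q2 (x : R) : R := / PI * RInt (fun t => t ^ 2 * sqrt (4 - t ^ 2)) x 2.

Definition theta_lhs (th : R) : R := th + cos th / sin th * (1 - / 3 * (cos th) ^ 2).

From Stdlib Require Import Reals Lra.
From Coquelicot Require Import Coquelicot.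
Open Scope R_scope.

(* At gamma = 1 the Marchenko-Pastur law on [0, 4] is the image of the semicircle law
   sqrt (4 - s^2) ds / (2 pi) on [0, 2] under s |-> s^2, so P_1(L^2; j/2) = Q_j(L), and the
   substitution s = 2 sin u makes every Q_j elementary in u.  In the derivative of the bracket
   of M the square-root terms cancel, and along L = 2 sin u its sign is that of
   R - theta_lhs u, where R > pi/2 is the right-hand side of the equation for theta.  As
   theta_lhs decreases from +oo to pi/2 on (0, pi/2], M decreases and then increases in u,
   with its minimum at the unique root; beyond L = 2 all P-terms vanish and M grows like L^2. *)

Lemma strict_incr_of_derive (f df : R -> R) (a b : R) : a < b ->
  (forall x, a <= x <= b -> is_derive f x (df x)) ->
  (forall x, a < x < b -> 0 < df x) -> f a < f b.
Proof.
  intros Hab Hf Hpos.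
  destruct (MVT_cor2 f df a b Hab) as [c [Hc Hac]].
  { intros c Hc. apply is_derive_Reals, Hf, Hc. }
  specialize (Hpos c Hac). nra.
Qed.

Lemma strict_decr_of_derive (f df : R -> R) (a b : R) : a < b ->
  (forall x, a <= x <= b -> is_derive f x (df x)) ->
  (forall x, a < x < b -> df x < 0) -> f b < f a.
Proof.
  intros Hab Hf Hneg.
  enough (- f a < - f b) by lra.
  apply (strict_incr_of_derive (fun x => - f x) (fun x => - df x)); auto.
  - intros x Hx. apply (is_derive_opp f), Hf, Hx.
  - intros x Hx. specialize (Hneg x Hx). lra.
Qed.

Lemma RInt_gen_at_right_continuous (f Psi : R -> R) (a b d : R) : 0 < d ->
  (forall y, a < y < a + d -> is_RInt f y b (Psi y)) -> continuous Psi a ->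
  RInt_gen f (at_right a) (at_point b) = Psi a.
Proof.
  intros Hd HPsi Hcont.
  apply is_RInt_gen_unique. intros P HP.
  destruct (Hcont P HP) as [e He].
  set (r := Rmin d e).
  assert (Hr : 0 < r) by (apply Rmin_pos; [lra | apply cond_pos]).
  exists (fun y => a < y < a + r) (fun z => z = b).
  - exists (mkposreal r Hr). intros y Hy Hay. split; [exact Hay|].
    apply Rabs_def2 in Hy. cbn in Hy. lra.
  - reflexivity.
  - intros y z Hy ->. exists (Psi y).
    assert (Hrd : r <= d) by apply Rmin_l.
    assert (Hre : r <= e) by apply Rmin_r.
    split.
    + apply HPsi. lra.
    + apply He. apply Rabs_def1; cbn; lra.
Qed.

Definition Qn (j : nat) (x : R) : R := / PI * RInt (fun t => t ^ j * sqrt (4 - t ^ 2)) x 2.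

Lemma Q0_Qn x : Q0 x = Qn 0 x.
Proof. unfold Q0, Qn. apply Rmult_eq_compat_l, RInt_ext. intros t _. simpl. ring. Qed.

Lemma Q1_Qn x : Q1 x = Qn 1 x.
Proof. unfold Q1, Qn. apply Rmult_eq_compat_l, RInt_ext. intros t _. simpl. ring. Qed.

Lemma Q2_Qn x : Q2 x = Qn 2 x.
Proof. reflexivity. Qed.

Lemma continuous_semicircle_weight j t : continuous (fun t => t ^ j * sqrt (4 - t ^ 2)) t.
Proof.
  apply (continuous_mult (fun t => t ^ j) (fun t => sqrt (4 - t ^ 2))).
  - apply (ex_derive_continuous (fun t => t ^ j)). auto_derive. exact I.
  - apply (continuous_comp (fun t => 4 - t ^ 2) sqrt).
    + apply (ex_derive_continuous (fun t => 4 - t ^ 2)). auto_derive. exact I.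
    + apply continuous_sqrt.
Qed.

Lemma is_derive_Qn j x : is_derive (Qn j) x (- / PI * (x ^ j * sqrt (4 - x ^ 2))).
Proof.
  set (w := fun t => t ^ j * sqrt (4 - t ^ 2)).
  replace (- / PI * (x ^ j * sqrt (4 - x ^ 2))) with (/ PI * opp (w x))
    by (unfold w, opp; simpl; ring).
  apply is_derive_scal, (is_derive_RInt' w _ x 2).
  - apply filter_forall. intros a. apply (RInt_correct (V := R_CompleteNormedModule)).
    apply ex_RInt_continuous. intros z _. apply continuous_semicircle_weight.
  - apply continuous_semicircle_weight.
Qed.

Lemma continuous_Qn j x : continuous (Qn j) x.
Proof. apply (ex_derive_continuous (Qn j)). eexists. apply is_derive_Qn. Qed.

Lemma Qn_2 j : Qn j 2 = 0.
Proof. unfold Qn. rewrite RInt_point. apply Rmult_0_r. Qed.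

Lemma sqrt_4_sub_2sin u : 0 <= cos u -> sqrt (4 - (2 * sin u) ^ 2) = 2 * cos u.
Proof.
  intros Hc. rewrite <- (sqrt_pow2 (2 * cos u)) by lra. f_equal.
  pose proof (sin2_cos2 u). unfold Rsqr in *. nra.
Qed.

Lemma Qn_2sin j (G : R -> R) u : 0 <= u <= PI / 2 ->
  (forall v, 0 <= v <= PI / 2 -> is_derive G v ((2 * sin v) ^ j * (4 * cos v ^ 2))) ->
  Qn j (2 * sin u) = (G (PI / 2) - G u) / PI.
Proof.
  intros Hu HG.
  set (w := fun t => t ^ j * sqrt (4 - t ^ 2)).
  set (g := fun v => (2 * sin v) ^ j * (4 * cos v ^ 2)).
  assert (Hsub : RInt w (2 * sin u) 2 = RInt (fun v => scal (2 * cos v) (w (2 * sin v))) u (PI / 2)).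
  { rewrite (RInt_comp w (fun v => 2 * sin v) (fun v => 2 * cos v)), sin_PI2, Rmult_1_r.
    - reflexivity.
    - intros v _. apply continuous_semicircle_weight.
    - intros v _. split.
      + auto_derive. exact I. ring.
      + apply (ex_derive_continuous (fun v => 2 * cos v)). auto_derive. exact I. }
  assert (HFTC : is_RInt g u (PI / 2) (minus (G (PI / 2)) (G u))).
  { apply (is_RInt_derive (V := R_CompleteNormedModule)).
    - intros v Hv. rewrite Rmin_left, Rmax_right in Hv by lra. apply HG. lra.
    - intros v _. apply (ex_derive_continuous g). unfold g. auto_derive. exact I. }
  unfold Qn. fold w. rewrite Hsub.
  rewrite (is_RInt_unique _ u (PI / 2) (minus (G (PI / 2)) (G u))).
  - change (/ PI * (G (PI / 2) - G u) = (G (PI / 2) - G u) / PI). apply Rmult_comm.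
  - apply (is_RInt_ext g); [|exact HFTC].
    intros v Hv. rewrite Rmin_left, Rmax_right in Hv by lra.
    change (g v = 2 * cos v * w (2 * sin v)). unfold g, w.
    rewrite sqrt_4_sub_2sin by (apply cos_ge_0; lra). ring.
Qed.

Lemma Qn0_2sin u : 0 <= u <= PI / 2 -> Qn 0 (2 * sin u) = (PI - 2 * u - 2 * sin u * cos u) / PI.
Proof.
  intros Hu.
  rewrite (Qn_2sin 0 (fun v => 2 * v + 2 * sin v * cos v)); [| exact Hu |].
  - rewrite sin_PI2, cos_PI2. pose proof PI_RGT_0. field. lra.
  - intros v _. auto_derive; [exact I|]. pose proof (sin2_cos2 v). unfold Rsqr in *. nra.
Qed.

Lemma Qn1_2sin u : 0 <= u <= PI / 2 -> Qn 1 (2 * sin u) = 8 * cos u ^ 3 / (3 * PI).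
Proof.
  intros Hu.
  rewrite (Qn_2sin 1 (fun v => - (8 / 3) * cos v ^ 3)); [| exact Hu |].
  - rewrite cos_PI2. pose proof PI_RGT_0. field. lra.
  - intros v _. auto_derive; [exact I|]. field.
Qed.

Lemma Qn2_2sin u : 0 <= u <= PI / 2 ->
  Qn 2 (2 * sin u) = (PI - 2 * u + 2 * sin u * cos u * (cos u ^ 2 - sin u ^ 2)) / PI.
Proof.
  intros Hu.
  rewrite (Qn_2sin 2 (fun v => 2 * v - 2 * sin v * cos v * (cos v ^ 2 - sin v ^ 2))); [| exact Hu |].
  - rewrite sin_PI2, cos_PI2. pose proof PI_RGT_0. field. lra.
  - intros v _. auto_derive; [exact I|]. pose proof (sin2_cos2 v). unfold Rsqr in *. nra.
Qed.

Lemma asin_half_spec x : 0 <= x <= 2 ->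
  0 <= asin (x / 2) <= PI / 2 /\ 2 * sin (asin (x / 2)) = x.
Proof.
  intros Hx.
  assert (Hs : sin (asin (x / 2)) = x / 2) by (apply sin_asin; lra).
  pose proof (asin_bound (x / 2)).
  split; [split | lra]; [|lra].
  destruct (Rle_or_lt 0 (asin (x / 2))) as [H0 | Hneg]; [exact H0|].
  enough (sin (asin (x / 2)) < 0) by lra.
  apply sin_lt_0_var; lra.
Qed.

Lemma Q0_closed x : 0 <= x < 2 ->
  Q0 x = 1 - x / (2 * PI) * sqrt (4 - x ^ 2) - 2 / PI * atan (x / sqrt (4 - x ^ 2)).
Proof.
  intros Hx. destruct (asin_half_spec x) as [Hu Hs]; [lra|].
  set (u := asin (x / 2)) in *.
  assert (Hu2 : u < PI / 2).
  { destruct Hu as [_ [Hlt | Heq]]; [exact Hlt|]. rewrite Heq, sin_PI2 in Hs. lra. }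
  assert (Hc : 0 < cos u) by (apply cos_gt_0; lra).
  rewrite Q0_Qn, <- Hs, Qn0_2sin, sqrt_4_sub_2sin by lra.
  replace (2 * sin u / (2 * cos u)) with (tan u) by (unfold tan; field; lra).
  rewrite atan_tan by lra.
  pose proof PI_RGT_0. field. lra.
Qed.

Lemma Q1_closed x : 0 <= x <= 2 -> Q1 x = / (3 * PI) * ((4 - x ^ 2) * sqrt (4 - x ^ 2)).
Proof.
  intros Hx. destruct (asin_half_spec x Hx) as [Hu Hs].
  set (u := asin (x / 2)) in *.
  assert (Hc : 0 <= cos u) by (apply cos_ge_0; lra).
  rewrite Q1_Qn, <- Hs, Qn1_2sin, sqrt_4_sub_2sin by lra.
  pose proof PI_RGT_0. pose proof (sin2_cos2 u). unfold Rsqr in *.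
  replace (4 - (2 * sin u) ^ 2) with (4 * cos u ^ 2) by nra. field. lra.
Qed.

Lemma Q2_closed x : 0 <= x <= 2 ->
  Q2 x = 1 - / (4 * PI) * x * sqrt (4 - x ^ 2) * (x ^ 2 - 2) - 2 / PI * asin (x / 2).
Proof.
  intros Hx. destruct (asin_half_spec x Hx) as [Hu Hs].
  set (u := asin (x / 2)) in *.
  assert (Hc : 0 <= cos u) by (apply cos_ge_0; lra).
  rewrite Q2_Qn, <- Hs, Qn2_2sin, sqrt_4_sub_2sin by lra.
  pose proof PI_RGT_0. pose proof (sin2_cos2 u). unfold Rsqr in *.
  replace (cos u ^ 2 - sin u ^ 2) with (1 - 2 * sin u ^ 2) by nra. field. lra.
Qed.

Lemma gamma_of_diag rho : 0 < rho < 1 -> gamma_of rho rho = 1.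
Proof. intros Hrho. unfold gamma_of. field. nra. Qed.

Lemma gamma_plus_1 : gamma_plus 1 = 4.
Proof. unfold gamma_plus. rewrite sqrt_1. ring. Qed.

Lemma gamma_minus_1 : gamma_minus 1 = 0.
Proof. unfold gamma_minus. rewrite sqrt_1. ring. Qed.

Lemma mp_density_1_in t : 0 <= t <= 4 -> mp_density 1 t = / (2 * PI * t) * sqrt ((4 - t) * t).
Proof.
  intros Ht. unfold mp_density. rewrite gamma_plus_1, gamma_minus_1, Rmult_1_r, Rminus_0_r.
  destruct (Rle_dec 0 t); [|lra]. destruct (Rle_dec t 4); [reflexivity | lra].
Qed.

Lemma mp_density_1_out t : 4 < t -> mp_density 1 t = 0.
Proof.
  intros Ht. unfold mp_density. rewrite gamma_plus_1, gamma_minus_1.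
  destruct (Rle_dec 0 t); [|lra]. destruct (Rle_dec t 4); [lra | reflexivity].
Qed.

Lemma Rpower_sq_half j s : 0 < s -> Rpower (s ^ 2) (INR j / 2) = s ^ j.
Proof.
  intros Hs. rewrite <- (Rpower_pow 2 s Hs), Rpower_mult, <- Rpower_pow by exact Hs.
  f_equal. simpl. field.
Qed.

(* The substitution t = s^2 carries the Marchenko-Pastur law at gamma = 1 to the semicircle law. *)
Lemma is_RInt_mp_moment j s : 0 < s <= 2 ->
  is_RInt (fun t => Rpower t (INR j / 2) * mp_density 1 t) (s ^ 2) 4 (Qn j s).
Proof.
  intros Hs.
  set (g := fun t => Rpower t (INR j / 2) * / (2 * PI * t) * sqrt ((4 - t) * t)).
  assert (Hg : forall t, 0 < t -> continuous g t).
  { intros t Ht.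
    apply (continuous_mult (fun t => Rpower t (INR j / 2) * / (2 * PI * t))
                           (fun t => sqrt ((4 - t) * t))).
    - apply (ex_derive_continuous (fun t => Rpower t (INR j / 2) * / (2 * PI * t))).
      unfold Rpower. auto_derive. pose proof PI_RGT_0. repeat split; nra.
    - apply (continuous_comp (fun t => (4 - t) * t) sqrt).
      + apply (ex_derive_continuous (fun t => (4 - t) * t)). auto_derive. exact I.
      + apply continuous_sqrt. }
  assert (Hs2 : 0 < s ^ 2 <= 4) by nra.
  apply is_RInt_ext with g.
  { intros t Ht. rewrite Rmin_left, Rmax_right in Ht by lra.
    unfold g; simpl. rewrite mp_density_1_in by lra. ring. }
  replace 4 with (2 ^ 2) by ring.
  replace (Qn j s) with (RInt g (s ^ 2) (2 ^ 2)).
  { apply (RInt_correct (V := R_CompleteNormedModule)), ex_RInt_continuous.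
    intros z Hz. rewrite Rmin_left, Rmax_right in Hz by lra. apply Hg. lra. }
  rewrite <- (RInt_comp g (fun y => y ^ 2) (fun y => 2 * y)).
  - unfold Qn. rewrite <- (RInt_scal (V := R_CompleteNormedModule)).
    + apply RInt_ext. intros y Hy. rewrite Rmin_left, Rmax_right in Hy by lra.
      change (2 * y * g (y ^ 2) = / PI * (y ^ j * sqrt (4 - y ^ 2))). unfold g.
      rewrite Rpower_sq_half by lra.
      rewrite sqrt_mult_alt, sqrt_pow2 by nra.
      pose proof PI_RGT_0. field. lra.
    + apply ex_RInt_continuous. intros z _. apply continuous_semicircle_weight.
  - intros y Hy. rewrite Rmin_left, Rmax_right in Hy by lra. apply Hg. nra.
  - intros y _. split.
    + auto_derive. exact I. ring.
    + apply (ex_derive_continuous (fun y => 2 * y)). auto_derive. exact I.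
Qed.

Lemma P_gamma_1_beyond k x : 4 <= x -> P_gamma 1 x k = 0.
Proof.
  intros Hx. unfold P_gamma. rewrite gamma_plus_1.
  apply (RInt_gen_at_right_continuous _ (fun _ => 0) x 4 1); [lra | | apply continuous_const].
  intros y Hy.
  apply is_RInt_ext with (fun _ => 0).
  { intros t Ht. rewrite Rmin_right, Rmax_left in Ht by lra.
    rewrite mp_density_1_out by lra. symmetry; apply Rmult_0_r. }
  pose proof (is_RInt_const (V := R_NormedModule) y 4 0) as Hconst.
  change (scal (4 - y) 0) with ((4 - y) * 0) in Hconst.
  rewrite Rmult_0_r in Hconst. exact Hconst.
Qed.

Lemma P_gamma_1_sq k j L : k = INR j / 2 -> 0 <= L <= 2 -> P_gamma 1 (L ^ 2) k = Qn j L.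
Proof.
  intros -> HL.
  destruct (Req_dec L 2) as [-> | HL2].
  { rewrite Qn_2. apply P_gamma_1_beyond. lra. }
  unfold P_gamma. rewrite gamma_plus_1.
  rewrite <- (sqrt_pow2 L) at 2 by lra.
  apply (RInt_gen_at_right_continuous _ (fun y => Qn j (sqrt y)) _ 4 (4 - L ^ 2)).
  - nra.
  - intros y Hy.
    assert (Hsy : 0 < sqrt y <= 2).
    { split. apply sqrt_lt_R0. nra.
      rewrite <- (sqrt_pow2 2) by lra. apply sqrt_le_1_alt. lra. }
    rewrite <- (pow2_sqrt y) at 1 by nra. apply is_RInt_mp_moment, Hsy.
  - apply (continuous_comp sqrt (Qn j)); [apply continuous_sqrt | apply continuous_Qn].
Qed.

Lemma M_diag_semicircle rho alpha L : 0 < rho < 1 -> 0 <= L <= 2 ->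
  M L rho rho alpha = rho * (2 - rho) + (1 - rho) * (rho * L ^ 2 +
     alpha * (1 - rho) * (Qn 2 L - 2 * L * Qn 1 L + L ^ 2 * Qn 0 L)).
Proof.
  intros Hrho HL. unfold M. cbv zeta. rewrite gamma_of_diag by exact Hrho.
  rewrite (P_gamma_1_sq 1 2), (P_gamma_1_sq (1 / 2) 1), (P_gamma_1_sq 0 0)
    by (simpl; lra || exact HL).
  ring.
Qed.

Lemma M_diag_beyond rho alpha L : 0 < rho < 1 -> 2 <= L ->
  M L rho rho alpha = rho * (2 - rho) + (1 - rho) * (rho * L ^ 2).
Proof.
  intros Hrho HL. unfold M. cbv zeta. rewrite gamma_of_diag by exact Hrho.
  rewrite !P_gamma_1_beyond by nra. ring.
Qed.

(* [sin u * theta_lhs u], written without the pole of [theta_lhs] at [u = 0]. *)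
Definition theta_lhs_sin (u : R) : R := u * sin u + cos u - / 3 * cos u ^ 3.

Lemma theta_lhs_sin_eq u : sin u <> 0 -> theta_lhs_sin u = sin u * theta_lhs u.
Proof. intros Hs. unfold theta_lhs_sin, theta_lhs. field. exact Hs. Qed.

Lemma is_derive_theta_lhs u : sin u <> 0 ->
  is_derive theta_lhs u (- (2 / 3) * cos u ^ 4 / sin u ^ 2).
Proof.
  intros Hs. unfold theta_lhs. auto_derive; [exact Hs|].
  assert (Hpy : sin u ^ 2 + cos u ^ 2 = 1) by (rewrite <- (sin2_cos2 u); unfold Rsqr; ring).
  transitivity (1 - (sin u ^ 2 + cos u ^ 2) / sin u ^ 2 * (1 - / 3 * cos u ^ 2) + 2 / 3 * cos u ^ 2).
  { field. exact Hs. }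
  assert (Hs2 : sin u ^ 2 <> 0) by (apply pow_nonzero, Hs).
  rewrite Hpy. replace (sin u ^ 2) with (1 - cos u ^ 2) by lra.
  field. intros H. apply Hs2. lra.
Qed.

Lemma theta_lhs_decreasing t1 t2 : 0 < t1 -> t1 < t2 -> t2 <= PI / 2 ->
  theta_lhs t2 < theta_lhs t1.
Proof.
  intros H1 H12 H2.
  apply (strict_decr_of_derive theta_lhs (fun u => - (2 / 3) * cos u ^ 4 / sin u ^ 2)); [exact H12 | |].
  - intros u Hu. apply is_derive_theta_lhs.
    assert (0 < sin u) by (apply sin_gt_0; pose proof PI_RGT_0; lra). lra.
  - intros u Hu.
    assert (0 < sin u) by (apply sin_gt_0; pose proof PI_RGT_0; lra).
    assert (0 < cos u) by (apply cos_gt_0; lra).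
    assert (0 < cos u ^ 4 / sin u ^ 2) by (apply Rdiv_lt_0_compat; apply pow_lt; lra).
    unfold Rdiv in *. lra.
Qed.

Section Minimization.

Variables rho alpha : R.
Hypothesis hrho : 0 < rho < 1.
Hypothesis halpha : 0 < alpha.

Definition M_bracket (L : R) : R :=
  rho * L ^ 2 + alpha * (1 - rho) * (Qn 2 L - 2 * L * Qn 1 L + L ^ 2 * Qn 0 L).

Definition theta_target : R := PI * (1 + / alpha * rho - rho) / (2 * (1 - rho)).

(* The square-root terms of the derivatives of the Qn cancel: L^2 - 2 L * L + L^2 = 0. *)
Lemma is_derive_M_bracket L :
  is_derive M_bracket L (2 * rho * L + 2 * alpha * (1 - rho) * (L * Qn 0 L - Qn 1 L)).
Proof.
  unfold M_bracket. auto_derive.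
  - repeat split; eexists; apply is_derive_Qn.
  - rewrite !(is_derive_unique _ _ _ (is_derive_Qn _ L)). ring.
Qed.

Lemma M_bracket_slope_2sin u : 0 <= u <= PI / 2 ->
  2 * rho * (2 * sin u) + 2 * alpha * (1 - rho) * (2 * sin u * Qn 0 (2 * sin u) - Qn 1 (2 * sin u))
  = 8 * alpha * (1 - rho) / PI * (theta_target * sin u - theta_lhs_sin u).
Proof.
  intros Hu. rewrite Qn0_2sin, Qn1_2sin by exact Hu.
  unfold theta_target, theta_lhs_sin.
  replace (cos u ^ 3) with (cos u * (1 - sin u ^ 2))
    by (rewrite <- (sin2_cos2 u); unfold Rsqr; ring).
  pose proof PI_RGT_0. field. repeat split; lra.
Qed.

Lemma is_derive_M_bracket_2sin u : 0 <= u <= PI / 2 ->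
  is_derive (fun v => M_bracket (2 * sin v)) u
    (16 * alpha * (1 - rho) / PI * cos u * (theta_target * sin u - theta_lhs_sin u)).
Proof.
  intros Hu.
  replace (16 * alpha * (1 - rho) / PI * cos u * (theta_target * sin u - theta_lhs_sin u))
    with (2 * cos u * (2 * rho * (2 * sin u) + 2 * alpha * (1 - rho)
            * (2 * sin u * Qn 0 (2 * sin u) - Qn 1 (2 * sin u)))).
  - apply (is_derive_comp M_bracket (fun v => 2 * sin v)).
    + apply is_derive_M_bracket.
    + auto_derive; [exact I | ring].
  - rewrite M_bracket_slope_2sin by exact Hu. unfold Rdiv. ring.
Qed.

Lemma theta_target_gt_PI2 : PI / 2 < theta_target.
Proof.
  unfold theta_target. pose proof PI_RGT_0.
  replace (PI * (1 + / alpha * rho - rho) / (2 * (1 - rho)))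
    with (PI / 2 + PI * rho / (2 * alpha * (1 - rho))) by (field; lra).
  enough (0 < PI * rho / (2 * alpha * (1 - rho))) by lra.
  apply Rdiv_lt_0_compat; [nra | apply Rmult_lt_0_compat; lra].
Qed.

Lemma theta_root_exists : exists th, 0 < th < PI / 2 /\ theta_lhs th = theta_target.
Proof.
  pose proof theta_target_gt_PI2. pose proof PI_RGT_0.
  set (f := fun u => theta_target * sin u - theta_lhs_sin u).
  assert (Hf : continuity f).
  { intros x. apply continuity_pt_filterlim, (ex_derive_continuous f).
    unfold f, theta_lhs_sin. auto_derive. exact I. }
  assert (Hf0 : f 0 < 0) by (unfold f, theta_lhs_sin; rewrite sin_0, cos_0; lra).
  assert (Hf1 : 0 < f (PI / 2)) by (unfold f, theta_lhs_sin; rewrite sin_PI2, cos_PI2; lra).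
  destruct (IVT f 0 (PI / 2) Hf) as [th [Hth Hroot]]; [lra | exact Hf0 | exact Hf1 |].
  assert (Hth' : 0 < th < PI / 2).
  { split; apply Rnot_ge_lt; intros Hge.
    - replace th with 0 in Hroot by lra. lra.
    - replace th with (PI / 2) in Hroot by lra. lra. }
  assert (Hsin : 0 < sin th) by (apply sin_gt_0; lra).
  exists th. split; [exact Hth'|].
  unfold f in Hroot. rewrite theta_lhs_sin_eq in Hroot by lra.
  apply (Rmult_eq_reg_l (sin th)); lra.
Qed.

Lemma M_bracket_2sin_strict_min th u : 0 < th < PI / 2 -> theta_lhs th = theta_target ->
  0 <= u <= PI / 2 -> u <> th -> M_bracket (2 * sin th) < M_bracket (2 * sin u).
Proof.
  intros Hth Hroot Hu Hne.
  set (slope := fun v => 16 * alpha * (1 - rho) / PI * cos v * (theta_target * sin v - theta_lhs_sin v)).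
  assert (Hslope : forall v, 0 < v < PI / 2 ->
            exists c, 0 < c /\ slope v = c * (theta_target - theta_lhs v)).
  { intros v Hv.
    assert (0 < sin v) by (apply sin_gt_0; lra).
    assert (0 < cos v) by (apply cos_gt_0; lra).
    exists (16 * alpha * (1 - rho) / PI * cos v * sin v). split.
    - pose proof PI_RGT_0.
      repeat apply Rmult_lt_0_compat; try lra. apply Rinv_0_lt_compat. lra.
    - unfold slope. rewrite theta_lhs_sin_eq by lra. ring. }
  destruct (Rlt_or_le u th) as [Hlt | Hle].
  - apply (strict_decr_of_derive (fun v => M_bracket (2 * sin v)) slope u th Hlt).
    + intros v Hv. apply is_derive_M_bracket_2sin. lra.
    + intros v Hv. destruct (Hslope v ltac:(lra)) as [c [Hc ->]].
      assert (theta_lhs th < theta_lhs v) by (apply theta_lhs_decreasing; lra). nra.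
  - apply (strict_incr_of_derive (fun v => M_bracket (2 * sin v)) slope th u); [lra | |].
    + intros v Hv. apply is_derive_M_bracket_2sin. lra.
    + intros v Hv. destruct (Hslope v ltac:(lra)) as [c [Hc ->]].
      assert (theta_lhs v < theta_lhs th) by (apply theta_lhs_decreasing; lra). nra.
Qed.

Lemma M_bracket_2 : M_bracket 2 = 4 * rho.
Proof. unfold M_bracket. rewrite !Qn_2. ring. Qed.

Lemma M_diag_strict_min th L : 0 < th < PI / 2 -> theta_lhs th = theta_target ->
  0 <= L -> L <> 2 * sin th -> M (2 * sin th) rho rho alpha < M L rho rho alpha.
Proof.
  intros Hth Hroot HL Hne.
  assert (Hsin : 0 < sin th <= 1) by (split; [apply sin_gt_0; lra | apply SIN_bound]).
  rewrite M_diag_semicircle by (exact hrho || lra). fold (M_bracket (2 * sin th)).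
  destruct (Rle_or_lt L 2) as [HL2 | HL2].
  - destruct (asin_half_spec L (conj HL HL2)) as [Hu Hs].
    rewrite M_diag_semicircle by (exact hrho || lra). fold (M_bracket L).
    rewrite <- Hs.
    assert (M_bracket (2 * sin th) < M_bracket (2 * sin (asin (L / 2)))).
    { apply M_bracket_2sin_strict_min; [exact Hth | exact Hroot | exact Hu |].
      intros Heq. apply Hne. rewrite <- Hs, Heq. reflexivity. }
    nra.
  - rewrite M_diag_beyond by (exact hrho || lra).
    assert (Hmin : M_bracket (2 * sin th) < M_bracket (2 * sin (PI / 2)))
      by (apply M_bracket_2sin_strict_min; lra).
    rewrite sin_PI2, Rmult_1_r, M_bracket_2 in Hmin.
    assert (rho * 4 < rho * L ^ 2) by (apply Rmult_lt_compat_l; nra).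
    nra.
Qed.

End Minimization.

Theorem theorem5 (rho alpha : R) (hrho : 0 < rho < 1) (halpha : alpha = 1 / 2 \/ alpha = 1) :
  (forall L : R, 0 <= L <= 2 ->
     M L rho rho alpha =
     rho * (2 - rho) + (1 - rho) * (rho * L ^ 2 +
        alpha * (1 - rho) * (Q2 L - 2 * L * Q1 L + L ^ 2 * Q0 L))) /\
  (forall x : R, 0 <= x < 2 ->
     Q0 x = 1 - x / (2 * PI) * sqrt (4 - x ^ 2) - 2 / PI * atan (x / sqrt (4 - x ^ 2))) /\
  (forall x : R, 0 <= x <= 2 ->
     Q1 x = / (3 * PI) * ((4 - x ^ 2) * sqrt (4 - x ^ 2))) /\
  (forall x : R, 0 <= x <= 2 ->
     Q2 x = 1 - / (4 * PI) * x * sqrt (4 - x ^ 2) * (x ^ 2 - 2) - 2 / PI * asin (x / 2)) /\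
  (forall t1 t2 : R, 0 < t1 -> t1 < t2 -> t2 <= PI / 2 -> theta_lhs t2 < theta_lhs t1) /\
  (exists th : R,
     (0 < th <= PI / 2 /\
      theta_lhs th = PI * (1 + / alpha * rho - rho) / (2 * (1 - rho))) /\
     (forall th' : R, 0 < th' <= PI / 2 ->
        theta_lhs th' = PI * (1 + / alpha * rho - rho) / (2 * (1 - rho)) -> th' = th) /\
     (forall L : R, 0 <= L ->
        M (2 * sin th) rho rho alpha <= M L rho rho alpha /\
        (M L rho rho alpha = M (2 * sin th) rho rho alpha -> L = 2 * sin th))).
Proof.
  assert (Ha : 0 < alpha) by (destruct halpha; lra).
  split.
  { intros L HL. rewrite Q0_Qn, Q1_Qn, Q2_Qn. exact (M_diag_semicircle rho alpha L hrho HL). }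
  split; [exact Q0_closed |].
  split; [exact Q1_closed |].
  split; [exact Q2_closed |].
  split; [exact theta_lhs_decreasing |].
  destruct (theta_root_exists rho alpha hrho Ha) as [th [Hth Hroot]].
  exists th. split; [split; [lra | exact Hroot] | split].
  - intros th' Hth' Hroot'. unfold theta_target in Hroot.
    destruct (Rtotal_order th' th) as [Hlt | [Heq | Hgt]]; [| exact Heq |].
    + pose proof (theta_lhs_decreasing th' th). lra.
    + pose proof (theta_lhs_decreasing th th'). lra.
  - intros L HL. destruct (Req_dec L (2 * sin th)) as [-> | Hne]; [split; [lra | reflexivity] |].
    pose proof (M_diag_strict_min rho alpha hrho Ha th L Hth Hroot HL Hne).
    split; intros; lra.
Qed.
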